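(* For every $\lambda\in\Lambda$, the map $Q^*_\lambda=P_\lambda+Q$ has a unique fixed point $h(\lambda)$ in the closed ball $\{z:|z-1|\le |Q(1)|/p\}$. The resulting function $h:\Lambda\to\{z:|z-1|\le|Q(1)|/p\}$, $\lambda\mapsto h(\lambda)$, is holomorphic on $\Lambda$ (it is the uniform limit on $\Lambda$ of rational functions in $\lambda$ without poles in $\Lambda$, equivalently given by a power series convergent on $\Lambda$).
   Context: Let $p$ be a prime and $\mathbb C_p$ the completion of an algebraic closure of $\mathbb Q_p$, with $p$-adic absolute value $|\cdot|$, $|p|=1/p$. Let $\Lambda=\{\lambda\in\mathbb C_p:|\lambda-1|<1\}$ and $P_\lambda(z)=\frac{\lambda}{p}z^p+\left(1-\frac{\lambda}{p}\right)z^{p+1}$ for $\lambda\in\Lambda$. Let $\rho=p^{-1/(p-1)}$. Fix $\hat r\in|\mathbb C_p^*|$ with $\hat r>1$, $B=\{z:|z|\le\hat r\}$, and let $\mathcal H(B)$ be the power series $\sum a_iz^i$ convergent on $B$ with norm $\|f\|_B=\sup_i|a_i|\hat r^{\,i}$. Fix $Q\in\mathcal H(B)$ with $\|Q\|_B<\rho$. *)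

From HB Require Import structures.
From mathcomp Require Import all_boot all_order all_algebra.
From mathcomp Require Import boolp classical_sets reals exp.
Set Implicit Arguments.
Unset Strict Implicit.
Unset Printing Implicit Defensive.
Import Order.TTheory GRing.Theory Num.Theory.
Local Open Scope ring_scope.
Local Open Scope classical_set_scope.

Section Defs.
Variables (K : fieldType) (R : realType) (abs : K -> R).

Definition cvg_to (u : nat -> K) (l : K) : Prop :=
  forall eps : R, 0 < eps ->
    exists N : nat, forall n : nat, (N <= n)%N -> abs (u n - l) < eps.

Definition cauchy_seq (u : nat -> K) : Prop :=
  forall eps : R, 0 < eps -> exists N : nat, forall m n : nat,
    (N <= m)%N -> (N <= n)%N -> abs (u m - u n) < eps.

(* C_p characterized up to isometric isomorphism: a complete, algebraically
   closed field with an ultrametric absolute value such that |p| = 1/p and in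
   which the algebraic numbers (over Q) are dense, i.e. the completion of an
   algebraic closure of Q_p. *)
Record is_Cp (p : nat) : Prop := {
  abs_ge0 : forall x, 0 <= abs x;
  abs_eq0 : forall x, (abs x == 0) = (x == 0);
  absM : forall x y, abs (x * y) = abs x * abs y;
  abs_ultra : forall x y, abs (x + y) <= Num.max (abs x) (abs y);
  abs_p : abs (p%:R) = (p%:R)^-1;
  Cp_complete : forall u, cauchy_seq u -> exists l, cvg_to u l;
  Cp_alg_closed : forall q : {poly K}, (1 < size q)%N -> exists x, root q x;
  Cp_alg_dense : forall (x : K) (eps : R), 0 < eps ->
    exists (y : K) (q : {poly rat}),
      [/\ q != 0, root (map_poly ratr q) y & abs (x - y) < eps]
}.

Definition psum (a : nat -> K) (z : K) (n : nat) : K :=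
  \sum_(i < n) a i * z ^+ i.

Definition series_to (a : nat -> K) (z l : K) : Prop := cvg_to (psum a z) l.

Definition ps_eval (a : nat -> K) (z : K) : K :=
  xget 0 [set l | series_to a z l].

Definition in_HB (rhat : R) (a : nat -> K) : Prop :=
  forall z, abs z <= rhat -> exists l, series_to a z l.

Definition normB (rhat : R) (a : nat -> K) : R :=
  sup [set abs (a i) * rhat ^+ i | i in [set: nat]].

Definition inLambda (lam : K) : Prop := abs (lam - 1) < 1.

End Defs.

Definition Plam (K : fieldType) (p : nat) (lam z : K) : K :=
  lam / p%:R * z ^+ p + (1 - lam / p%:R) * z ^+ p.+1.

Definition rho (R : realType) (p : nat) : R :=
  powR (p%:R : R) (- ((p.-1)%:R)^-1).

From HB Require Import structures.
From mathcomp Require Import all_boot all_order all_algebra.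
From mathcomp Require Import boolp classical_sets reals exp.
From mathcomp Require Import ring lra.
Import Order.TTheory GRing.Theory Num.Theory.
Local Open Scope ring_scope.
Set Implicit Arguments.
Unset Strict Implicit.

(* Put z = 1 + w and mu = lam - 1.  The equation P_lam(z) + Q(z) = z is
   equivalent to w = T_mu(w) for the damped step
     T_mu(w) = w - p/(p^2 - 1) (P_lam(1 + w) + Q(1 + w) - (1 + w)),
   whose linear part is mu w/(p^2 - 1) and whose remaining terms carry the
   factor p, of absolute value 1/p.  Since |Q(1+w) - Q(1+w')| <= |Q| |w - w'|
   with |Q| = ||Q||_B < rho <= 1, T_mu is a contraction of the ball
   |w| <= |Q|/p with ratio max(|mu|, |Q|) < 1, hence has a unique fixed point,
   and |T_mu(0)| = |Q(1)|/p puts it in the smaller ball of the statement.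
   Running the same iteration with mu an indeterminate (and Q truncated at the
   n-th step) gives polynomials w_n(mu) satisfying the same estimates for the
   Gauss norm at every radius s < 1; their coefficients therefore converge to
   a power series c with sum_i c_i (lam - 1)^i = 1 + w = h(lam). *)

(** * The relaxation step *)

(* With ip = 1/p and c = 1/(p^2 - 1), relax p ip c (lam - 1) w G equals
   w - p/(p^2 - 1) (P_lam(1 + w) + G - (1 + w)) (relax_subE); passing ip and c
   as ring elements lets the same formula live in {poly K}, with mu = 'X, and
   commute with ring morphisms. *)
Definition Plam_rem (A : comNzRingType) (p : nat) (ip lam w : A) : A :=
  lam * ip * ((1 + w) ^+ p - 1 - w *+ p)
  + (1 - lam * ip) * ((1 + w) ^+ p.+1 - 1 - w *+ p.+1).

Definition relax (A : comNzRingType) (p : nat) (ip c mu w G : A) : A :=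
  (mu * w - p%:R * (Plam_rem p ip (1 + mu) w + G)) * c.

Definition trunc_eval (A : comNzRingType) (a : nat -> A) (n : nat) (z : A) : A :=
  \sum_(i < n) a i * z ^+ i.

Section RelaxAlgebra.
Variables (A B : comNzRingType) (f : {rmorphism A -> B}) (p : nat).

Lemma rmorph_relax ip c mu w G :
  f (relax p ip c mu w G) = relax p (f ip) (f c) (f mu) (f w) (f G).
Proof.
by rewrite /relax /Plam_rem !(rmorphM, rmorphB, rmorphD, rmorph1, rmorphXn, rmorphMn).
Qed.

Lemma rmorph_trunc_eval a n z :
  f (trunc_eval a n z) = trunc_eval (f \o a) n (f z).
Proof. by rewrite rmorph_sum; apply: eq_bigr => i _; rewrite rmorphM rmorphXn. Qed.

Lemma relax0 ip c mu : relax p ip c mu 0 0 = 0 :> A.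
Proof. by rewrite /relax /Plam_rem !(addr0, mulr0, expr1n, mul0rn, subrr, mul0r). Qed.

End RelaxAlgebra.

Lemma subr_add2l (V : zmodType) (z x y : V) : z + x - (z + y) = x - y.
Proof. by rewrite [z + x]addrC addrKA. Qed.

Definition relax_at (K : fieldType) (p : nat) (mu w G : K) : K :=
  relax p p%:R^-1 (p%:R ^+ 2 - 1)^-1 mu w G.

Definition relax_poly (K : fieldType) (p : nat) (mu w G : {poly K}) : {poly K} :=
  relax p (p%:R^-1)%:P ((p%:R ^+ 2 - 1)^-1)%:P mu w G.

Lemma relax_atC (K : fieldType) p (mu w G : K) :
  (relax_at p mu w G)%:P = relax_poly p mu%:P w%:P G%:P.
Proof. by rewrite (rmorph_relax (@polyC K)). Qed.

Lemma horner_relax_poly (K : fieldType) p (mu w G : {poly K}) x :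
  (relax_poly p mu w G).[x] = relax_at p mu.[x] w.[x] G.[x].
Proof. by rewrite -horner_evalE rmorph_relax /= !horner_evalE !hornerC. Qed.

Lemma relax_subE (K : fieldType) p (lam v G : K) :
  p%:R != 0 :> K -> p%:R ^+ 2 - 1 != 0 :> K ->
  relax_at p (lam - 1) v G - v =
  - (p%:R / (p%:R ^+ 2 - 1)) * (Plam p lam (1 + v) + G - (1 + v)).
Proof.
move=> p0 c0; rewrite /relax_at /relax /Plam_rem /Plam.
set P := p%:R; set c := (P ^+ 2 - 1)^-1.
have Pc : (P ^+ 2 - 1) * c = 1 by rewrite mulfV.
have Pip : P * P^-1 = 1 by rewrite mulfV.
rewrite [(1 + v) ^+ p.+1]exprS mulrSr -[v *+ p]mulr_natr -/P.
apply/eqP; rewrite -subr_eq0; apply/eqP.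
transitivity (v * ((P ^+ 2 - 1) * c - 1) - c * lam * v * (P * P^-1 - 1)); first by ring.
by rewrite Pc Pip; ring.
Qed.

Lemma relax_fixedE (K : fieldType) p (lam v G : K) :
  p%:R != 0 :> K -> p%:R ^+ 2 - 1 != 0 :> K ->
  (relax_at p (lam - 1) v G == v) = (Plam p lam (1 + v) + G == 1 + v).
Proof.
move=> p0 c0; rewrite -subr_eq0 relax_subE // mulf_eq0 subr_eq0 oppr_eq0.
by rewrite mulf_eq0 invr_eq0 (negbTE p0) (negbTE c0).
Qed.

(** * Ultrametric estimates *)

Section Estimates.
Variables (p : nat) (K : fieldType) (R : realType) (abs : K -> R).
Hypotheses (Hc : is_Cp abs p) (pP : prime p).

Let abs_ge0 := abs_ge0 Hc.
Let abs_eq0 := abs_eq0 Hc.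
Let absM := absM Hc.
Let abs_ultra := abs_ultra Hc.
Let abs_p := abs_p Hc.

Lemma abs0 : abs 0 = 0. Proof. by apply/eqP; rewrite abs_eq0. Qed.

Lemma abs1 : abs 1 = 1.
Proof.
have a10 : abs 1 != 0 by rewrite abs_eq0 oner_eq0.
by apply: (mulfI a10); rewrite -absM !mulr1.
Qed.

Lemma absN1 : abs (-1) = 1.
Proof.
have sq1 : abs (-1) ^+ 2 = 1 by rewrite expr2 -absM mulrNN mulr1 abs1.
by apply/eqP; rewrite -(@eqrXn2 _ 2) ?abs_ge0 ?sq1 ?expr1n.
Qed.

Lemma absN x : abs (- x) = abs x. Proof. by rewrite -mulN1r absM absN1 mul1r. Qed.

Lemma abs_distC x y : abs (x - y) = abs (y - x). Proof. by rewrite -absN opprB. Qed.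

Lemma absX x n : abs (x ^+ n) = abs x ^+ n.
Proof. by elim: n => [|n IH]; rewrite ?abs1 // !exprS absM IH. Qed.

Lemma absV x : abs x^-1 = (abs x)^-1.
Proof.
have [->|x0] := eqVneq x 0; first by rewrite invr0 abs0 invr0.
have ax0 : abs x != 0 by rewrite abs_eq0.
by apply: (mulfI ax0); rewrite -absM !mulfV ?abs1.
Qed.

Lemma abs_add_le x y M : abs x <= M -> abs y <= M -> abs (x + y) <= M.
Proof. by move=> hx hy; apply: le_trans (abs_ultra x y) _; rewrite ge_max hx hy. Qed.

Lemma abs_dist_le_max x y z : abs (x - z) <= Num.max (abs (x - y)) (abs (y - z)).
Proof. by rewrite -[x - z](subrKA y) abs_ultra. Qed.

Lemma abs_add_eq_max x y : abs y < abs x -> abs (x + y) = abs x.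
Proof.
move=> yx; apply/eqP; rewrite eq_le; apply/andP; split.
  by apply: le_trans (abs_ultra x y) _; rewrite ge_max lexx ltW.
have := abs_ultra (x + y) (- y); rewrite addrK absN le_max.
by case/orP=> [//|/(lt_le_trans yx)]; rewrite ltxx.
Qed.

Lemma abs_sum_le_max I (r : seq I) (P : pred I) (F : I -> K) w M :
  0 <= w -> 0 <= M -> (forall i, P i -> abs (F i) * w <= M) ->
  abs (\sum_(i <- r | P i) F i) * w <= M.
Proof.
move=> w0 M0 hF; elim/big_ind: _ => //; first by rewrite abs0 mul0r.
move=> x y hx hy; have := abs_ultra x y; rewrite le_max => /orP[] h.
  exact: le_trans (ler_wpM2r w0 h) hx.
exact: le_trans (ler_wpM2r w0 h) hy.
Qed.

Lemma natp_gt0 : 0 < p%:R :> R. Proof. by rewrite ltr0n prime_gt0. Qed.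
Lemma natp_ge1 : 1 <= p%:R :> R. Proof. by rewrite ler1n prime_gt0. Qed.

Lemma natp_neq0 : p%:R != 0 :> K.
Proof. by rewrite -abs_eq0 abs_p invr_eq0 gt_eqF ?natp_gt0. Qed.

Lemma abs_invp : abs (p%:R^-1) = p%:R.
Proof. by rewrite absV abs_p invrK. Qed.

Lemma abs_sqrp_sub1 : abs (p%:R ^+ 2 - 1) = 1.
Proof.
rewrite addrC abs_add_eq_max ?absN ?abs1 // absX abs_p.
have p2 : 2 <= p%:R :> R by rewrite ler_nat prime_gt1.
by rewrite expr2 -invfM invf_lt1 ?mulr_gt0; nra.
Qed.

Lemma sqrp_sub1_neq0 : p%:R ^+ 2 - 1 != 0 :> K.
Proof. by rewrite -abs_eq0 abs_sqrp_sub1 oner_eq0. Qed.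

Lemma abs_inv_sqrp_sub1 : abs ((p%:R ^+ 2 - 1)^-1) = 1.
Proof. by rewrite absV abs_sqrp_sub1 invr1. Qed.

Variable s : R.
Hypothesis s0 : 0 <= s.

Definition gauss_le (f : {poly K}) (M : R) := forall i, abs f`_i * s ^+ i <= M.

Lemma gauss_le_ge0 f M : gauss_le f M -> 0 <= M.
Proof. by move/(_ 0%N); apply: le_trans; rewrite mulr_ge0 ?exprn_ge0. Qed.

Lemma gauss_leW f a b : a <= b -> gauss_le f a -> gauss_le f b.
Proof. by move=> ab h i; apply: le_trans (h i) ab. Qed.

Lemma gauss_leC c M : gauss_le c%:P M <-> abs c <= M.
Proof.
split=> [/(_ 0%N)|cM i]; first by rewrite coefC eqxx expr0 mulr1.
rewrite coefC; case: eqP => [->|_]; first by rewrite expr0 mulr1.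
by rewrite abs0 mul0r (le_trans _ cM).
Qed.

Lemma gauss_le0 M : 0 <= M -> gauss_le 0 M.
Proof. by move=> M0; apply/gauss_leC; rewrite abs0. Qed.

Lemma gauss_le1 : gauss_le 1 1.
Proof. by apply/gauss_leC; rewrite abs1. Qed.

Lemma gauss_leX : gauss_le 'X s.
Proof.
move=> i; rewrite coefX; case: eqP => [->|_]; first by rewrite abs1 mul1r.
by rewrite abs0 mul0r.
Qed.

Lemma gauss_leD_max f g a b : gauss_le f a -> gauss_le g b ->
  gauss_le (f + g) (Num.max a b).
Proof.
move=> hf hg i; rewrite coefD; have := abs_ultra f`_i g`_i.
rewrite le_max => /orP[] /(ler_wpM2r (exprn_ge0 i s0)) /le_trans -> //.
  by rewrite le_max hf.
by rewrite le_max hg orbT.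
Qed.

Lemma gauss_leD f g M : gauss_le f M -> gauss_le g M -> gauss_le (f + g) M.
Proof. by move=> hf /(gauss_leD_max hf); rewrite maxxx. Qed.

Lemma gauss_le_telescope (f : nat -> {poly K}) M N : 0 <= M ->
  (forall n, (N <= n)%N -> gauss_le (f n.+1 - f n) M) ->
  forall n j, (N <= n)%N -> gauss_le (f (n + j)%N - f n) M.
Proof.
move=> M0 hf n j Nn; elim: j => [|j IH]; first by rewrite addn0 subrr; apply: gauss_le0.
rewrite addnS -(subrKA (f (n + j)%N)); apply: gauss_leD => //.
by apply: hf; rewrite (leq_trans Nn) ?leq_addr.
Qed.

Lemma gauss_leN f M : gauss_le f M -> gauss_le (- f) M.
Proof. by move=> h i; rewrite coefN absN. Qed.

Lemma gauss_leB_max f g a b : gauss_le f a -> gauss_le g b ->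
  gauss_le (f - g) (Num.max a b).
Proof. by move=> hf /gauss_leN; apply: gauss_leD_max. Qed.

Lemma gauss_le_sum n (F : 'I_n -> {poly K}) M : 0 <= M ->
  (forall i, gauss_le (F i) M) -> gauss_le (\sum_(i < n) F i) M.
Proof.
move=> M0 hF i; rewrite coef_sum.
by apply: abs_sum_le_max => [||j _]; [exact: exprn_ge0 | | exact: hF].
Qed.

Lemma gauss_leM f g a b : gauss_le f a -> gauss_le g b -> gauss_le (f * g) (a * b).
Proof.
move=> hf hg i; have a0 := gauss_le_ge0 hf; have b0 := gauss_le_ge0 hg.
rewrite coefM; apply: abs_sum_le_max; rewrite ?exprn_ge0 ?mulr_ge0 // => j _.
have ji : (j <= i)%N by rewrite -ltnS.
rewrite -[i in s ^+ i](subnKC ji) exprD absM mulrACA.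
by apply: ler_pM; rewrite ?mulr_ge0 ?exprn_ge0.
Qed.

Lemma gauss_leXn f M n : gauss_le f M -> gauss_le (f ^+ n) (M ^+ n).
Proof.
move=> h; elim: n => [|n IH]; first by rewrite !expr0; apply: gauss_le1.
by rewrite !exprS; apply: gauss_leM.
Qed.

Lemma gauss_le1Xn f n : gauss_le f 1 -> gauss_le (f ^+ n) 1.
Proof. by move/(gauss_leXn n); rewrite expr1n. Qed.

Lemma gauss_le1M f g : gauss_le f 1 -> gauss_le g 1 -> gauss_le (f * g) 1.
Proof. by move=> hf /(gauss_leM hf); rewrite mulr1. Qed.

Lemma gauss_le_horner f M x : abs x = s -> gauss_le f M -> abs f.[x] <= M.
Proof.
move=> hx h; rewrite horner_coef -[abs _]mulr1.
apply: abs_sum_le_max; rewrite ?(gauss_le_ge0 h) // => i _.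
by rewrite mulr1 absM absX hx.
Qed.

Lemma gauss_le_add1 w t : t <= 1 -> gauss_le w t -> gauss_le (1 + w) 1.
Proof. by move=> t1 /(gauss_leD_max gauss_le1); apply: gauss_leW; rewrite ge_max lexx. Qed.

Lemma gauss_le_subXX x y d m : gauss_le x 1 -> gauss_le y 1 ->
  gauss_le (x - y) d -> gauss_le (x ^+ m - y ^+ m) d.
Proof.
move=> hx hy hd; rewrite subrXX -[d]mulr1; apply: gauss_leM => //.
by apply: gauss_le_sum => // i; apply: gauss_le1M; apply: gauss_le1Xn.
Qed.

(* The first-order part (x - y) *+ m of x^m - y^m cancels, leaving a product
   of two small factors. *)
Lemma gauss_le_subXX_lin x y r d m :
  gauss_le (x - 1) r -> gauss_le (y - 1) r -> r <= 1 -> gauss_le (x - y) d ->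
  gauss_le (x ^+ m - y ^+ m - (x - y) *+ m) (d * r).
Proof.
move=> hxr hyr r1 hd.
have hx : gauss_le x 1 by rewrite -(subrK 1 x) addrC; apply: gauss_le_add1 hxr.
have hy : gauss_le y 1 by rewrite -(subrK 1 y) addrC; apply: gauss_le_add1 hyr.
have pow1 z n : gauss_le z 1 -> gauss_le (z - 1) r -> gauss_le (z ^+ n - 1) r.
  by move=> hz hzr; rewrite -[X in _ - X](expr1n _ n); apply: gauss_le_subXX gauss_le1 _.
have -> : x ^+ m - y ^+ m - (x - y) *+ m =
    (x - y) * \sum_(i < m) (x ^+ (m.-1 - i) * y ^+ i - 1).
  by rewrite subrXX sumrB sumr_const card_ord mulrBr mulr_natr.
apply: gauss_leM => //; apply: gauss_le_sum => [|i]; first exact: gauss_le_ge0 hxr.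
set a := (m.-1 - i)%N; have -> : x ^+ a * y ^+ i - 1 = (x ^+ a - 1) * y ^+ i + (y ^+ i - 1).
  by ring.
apply: gauss_leD; last exact: pow1.
by rewrite -[r]mulr1; apply: gauss_leM; [apply: pow1 | apply: gauss_le1Xn].
Qed.

Lemma Plam_rem_lip mu t r w w' d : t <= 1 -> gauss_le mu t -> r <= 1 ->
  gauss_le w r -> gauss_le w' r -> gauss_le (w - w') d ->
  gauss_le (Plam_rem p (p%:R^-1)%:P (1 + mu) w - Plam_rem p (p%:R^-1)%:P (1 + mu) w')
      (p%:R * (d * r)).
Proof.
move=> t1 hmu r1 hw hw' hd.
set D := fun m => (1 + w) ^+ m - (1 + w') ^+ m - ((1 + w) - (1 + w')) *+ m.
have -> : Plam_rem p (p%:R^-1)%:P (1 + mu) w - Plam_rem p (p%:R^-1)%:P (1 + mu) w' =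
    (1 + mu) * (p%:R^-1)%:P * D p + (1 - (1 + mu) * (p%:R^-1)%:P) * D p.+1.
  by rewrite /Plam_rem /D !mulrnBl !mulrnDl; ring.
have hD m : gauss_le (D m) (d * r).
  apply: gauss_le_subXX_lin => //; last by rewrite subr_add2l.
    by rewrite addrAC subrr add0r.
  by rewrite addrAC subrr add0r.
have hL : gauss_le ((1 + mu) * (p%:R^-1)%:P) p%:R.
  rewrite -[X in gauss_le _ X]mul1r; apply: (gauss_leM (gauss_le_add1 t1 hmu)).
  by apply/gauss_leC; rewrite abs_invp.
have hL' : gauss_le (1 - (1 + mu) * (p%:R^-1)%:P) p%:R.
  by apply: gauss_leW _ (gauss_leB_max gauss_le1 hL); rewrite ge_max natp_ge1 lexx.
by apply: gauss_leD; apply: gauss_leM.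
Qed.

Lemma relax_poly_sub mu t r w w' G G' d g : t <= 1 -> gauss_le mu t -> r <= 1 ->
  gauss_le w r -> gauss_le w' r -> gauss_le (w - w') d -> gauss_le (G - G') g ->
  gauss_le (relax_poly p mu w G - relax_poly p mu w' G')
      (Num.max (t * d) (p%:R^-1 * Num.max (p%:R * (d * r)) g)).
Proof.
move=> t1 hmu r1 hw hw' hd hg.
have -> : relax_poly p mu w G - relax_poly p mu w' G' =
  (mu * (w - w') - p%:R%:P * ((Plam_rem p (p%:R^-1)%:P (1 + mu) w
     - Plam_rem p (p%:R^-1)%:P (1 + mu) w') + (G - G'))) * ((p%:R ^+ 2 - 1)^-1)%:P.
  by rewrite /relax_poly /relax polyC_natr; ring.
rewrite -[X in gauss_le _ X]mulr1; apply: gauss_leM.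
  apply: gauss_leB_max; first exact: (gauss_leM hmu hd).
  apply: gauss_leM; first by apply/gauss_leC; rewrite abs_p.
  exact: (gauss_leD_max (Plam_rem_lip t1 hmu r1 hw hw' hd) hg).
by apply/gauss_leC; rewrite abs_inv_sqrp_sub1.
Qed.

Lemma relax_poly_contr mu t r m w w' G G' d : 0 <= t <= 1 -> gauss_le mu t ->
  0 <= r <= 1 -> 0 <= m -> gauss_le w r -> gauss_le w' r -> gauss_le (w - w') d ->
  gauss_le (G - G') (m * d) ->
  gauss_le (relax_poly p mu w G - relax_poly p mu w' G') (Num.max t (Num.max r m) * d).
Proof.
move=> /andP[t0 t1] hmu /andP[r0 r1] m0 hw hw' hd hg.
have d0 := gauss_le_ge0 hd.
apply: gauss_leW _ (relax_poly_sub t1 hmu r1 hw hw' hd hg).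
set k := Num.max t (Num.max r m).
have kt : t <= k by rewrite le_max lexx.
have kr : r <= k by rewrite !le_max lexx orbT.
have km : m <= k by rewrite !le_max lexx !orbT.
rewrite ge_max ler_wpM2r //= ler_pdivrMl ?natp_gt0 // ge_max.
apply/andP; split; first by rewrite ler_pM2l ?natp_gt0 // mulrC ler_wpM2r.
apply: le_trans (ler_wpM2r d0 km) _.
by rewrite ler_peMl ?natp_ge1 // mulr_ge0 // (le_trans m0 km).
Qed.

Lemma relax_poly_ball mu t r w G g : t <= 1 -> gauss_le mu t -> 0 <= r <= 1 ->
  gauss_le w r -> gauss_le G g -> g <= p%:R * r -> gauss_le (relax_poly p mu w G) r.
Proof.
move=> t1 hmu /andP[r0 r1] hw hG gr.
have hw0 : gauss_le (w - 0) r by rewrite subr0.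
have hG0 : gauss_le (G - 0) g by rewrite subr0.
have := relax_poly_sub t1 hmu r1 hw (gauss_le0 r0) hw0 hG0.
rewrite /relax_poly relax0 subr0; apply: gauss_leW.
rewrite ge_max ler_piMl //= ler_pdivrMl ?natp_gt0 // ge_max gr andbT.
by rewrite ler_pM2l ?natp_gt0 // ler_piMr.
Qed.

Lemma relax_poly_trunc mu t r w G G' g : t <= 1 -> gauss_le mu t -> r <= 1 ->
  gauss_le w r -> gauss_le (G - G') g ->
  gauss_le (relax_poly p mu w G - relax_poly p mu w G') g.
Proof.
move=> t1 hmu r1 hw hg; have g0 := gauss_le_ge0 hg.
have hww : gauss_le (w - w) 0 by rewrite subrr; apply: gauss_le0.
apply: gauss_leW _ (relax_poly_sub t1 hmu r1 hw hw hww hg).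
rewrite !(mul0r, mulr0) ge_max g0 /= ler_pdivrMl ?natp_gt0 // ge_max.
by rewrite mulr_ge0 ?ler_peMl ?natp_ge1.
Qed.

Section TruncatedSeries.
Variables (q : nat -> K) (m : R).
Hypotheses (hq : forall i, abs (q i) <= m).

Let m0 : 0 <= m. Proof. exact: le_trans (abs_ge0 _) (hq 0). Qed.

Lemma trunc_eval_bound n r w : r <= 1 -> gauss_le w r ->
  gauss_le (trunc_eval (polyC \o q) n (1 + w)) m.
Proof.
move=> r1 hw; apply: gauss_le_sum => // i; rewrite -[m]mulr1.
by apply: gauss_leM; [apply/gauss_leC | apply/gauss_le1Xn/(gauss_le_add1 r1)].
Qed.

Lemma trunc_eval_lip n r w w' d : r <= 1 -> gauss_le w r -> gauss_le w' r ->
  gauss_le (w - w') d ->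
  gauss_le (trunc_eval (polyC \o q) n (1 + w) - trunc_eval (polyC \o q) n (1 + w'))
           (m * d).
Proof.
move=> r1 hw hw' hd; rewrite /trunc_eval -sumrB.
apply: gauss_le_sum => [|i]; first by rewrite mulr_ge0 ?(gauss_le_ge0 hd).
rewrite -mulrBr; apply: gauss_leM; first exact/gauss_leC.
apply: gauss_le_subXX; [exact: gauss_le_add1 r1 hw | exact: gauss_le_add1 r1 hw' |].
by rewrite subr_add2l.
Qed.

Lemma trunc_eval_succ n r w : r <= 1 -> gauss_le w r ->
  gauss_le (trunc_eval (polyC \o q) n.+1 (1 + w) - trunc_eval (polyC \o q) n (1 + w))
           (abs (q n)).
Proof.
move=> r1 hw; rewrite /trunc_eval big_ord_recr /= addrAC subrr add0r -[abs _]mulr1.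
by apply: gauss_leM; [apply/gauss_leC | apply/gauss_le1Xn/(gauss_le_add1 r1)].
Qed.

End TruncatedSeries.

End Estimates.

(** * Convergence *)

Section RealAux.
Variable R : realType.

Lemma bernoulli_ineq (h : R) n : 0 <= h -> 1 + n%:R * h <= (1 + h) ^+ n.
Proof.
move=> h0; elim: n => [|n IH]; first by rewrite mul0r addr0.
have nh2 : 0 <= n%:R * h * h by rewrite !mulr_ge0.
rewrite exprS -natr1; apply: le_trans (ler_wpM2l (addr_ge0 ler01 h0) IH); nra.
Qed.

Lemma expr_mul_le (k D e : R) : 0 <= k < 1 -> 0 <= D -> 0 < e ->
  exists n, k ^+ n * D <= e.
Proof.
move=> /andP[k0 k1] D0 e0.
have [->|kn0] := eqVneq k 0; first by exists 1%N; rewrite expr1 mul0r ltW.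
have kp : 0 < k by rewrite lt_def kn0.
set h := k^-1 - 1; have h0 : 0 < h by rewrite subr_gt0 invf_gt1.
have Dh : 0 <= D / (e * h) by rewrite divr_ge0 // mulr_ge0 // ltW.
exists (Num.Def.archi_bound (D / (e * h))); set n := Num.Def.archi_bound _.
have := archi_boundP Dh; rewrite -/n ltr_pdivrMr ?mulr_gt0 // => Dn.
have := bernoulli_ineq n (ltW h0); rewrite [1 + h]addrC subrK exprVn => hn.
have knp : 0 < k ^+ n by rewrite exprn_gt0.
rewrite mulrC -ler_pdivlMr //; apply/ltW/(lt_le_trans Dn).
have nh : 0 <= n%:R * h by rewrite mulr_ge0 ?ltW.
apply: le_trans (ler_wpM2l (ltW e0) hn); nra.
Qed.

(* [B n a] reads "the n-th error is at most a": errors contracting by [k] up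
   to vanishing perturbations [e n] eventually become arbitrarily small. *)
Lemma contraction_eventually_le (B : nat -> R -> Prop) (k D : R) (e : nat -> R) :
  0 <= k < 1 -> 0 <= D ->
  (forall n a b, a <= b -> B n a -> B n b) -> (forall n, B n D) ->
  (forall n a, 0 <= a -> B n a -> B n.+1 (Num.max (k * a) (e n))) ->
  (forall eps, 0 < eps -> exists N, forall n, (N <= n)%N -> e n <= eps) ->
  forall eps, 0 < eps -> exists N, forall n, (N <= n)%N -> B n eps.
Proof.
move=> /andP[k0 k1] D0 mono BD step he eps e0.
have [N hN] := he eps e0.
have Bj j : B (N + j)%N (Num.max (k ^+ j * D) eps).
  elim: j => [|j IH]; first by apply: mono _ _ _ _ (BD _); rewrite expr0 mul1r le_max lexx.
  rewrite addnS; apply: mono _ _ _ _ (step _ _ _ IH); last by rewrite le_max (ltW e0) orbT.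
  rewrite ge_max; apply/andP; split; last by rewrite le_max hN ?leq_addr ?orbT.
  rewrite maxr_pMr // ge_max mulrA -exprS le_max lexx /=.
  by rewrite le_max ler_piMl ?orbT // ltW.
have [j hj] : exists j, k ^+ j * D <= eps by apply: expr_mul_le; rewrite ?k0.
exists (N + j)%N => n Nn.
have Nn' : (N <= n)%N by apply: leq_trans Nn; apply: leq_addr.
rewrite -(subnKC Nn'); apply: mono _ _ _ _ (Bj _).
rewrite ge_max lexx andbT (le_trans _ hj) // ler_wpM2r // ler_wiXn2l // ?ltW //.
by rewrite leq_subRL.
Qed.

End RealAux.

Section Limits.
Variables (p : nat) (K : fieldType) (R : realType) (abs : K -> R).
Hypothesis Hc : is_Cp abs p.

Let abs_ge0 := abs_ge0 Hc.
Let abs_eq0 := abs_eq0 Hc.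

Lemma cvg_abs_le u l a M N : cvg_to abs u l ->
  (forall n, (N <= n)%N -> abs (u n - a) <= M) -> abs (l - a) <= M.
Proof.
move=> ul uM; rewrite leNgt; apply/negP => Ml.
have l0 : 0 < abs (l - a) by apply: le_lt_trans Ml; apply: le_trans (uM N _).
have [N' hN'] := ul _ l0; set n := maxn N N'.
have := abs_dist_le_max Hc l (u n) a; rewrite le_max => /orP[] h.
  rewrite [abs (l - u n)](abs_distC Hc) in h.
  by have := le_lt_trans h (hN' n (leq_maxr _ _)); rewrite ltxx.
by have := le_trans h (uM n (leq_maxl _ _)); rewrite leNgt Ml.
Qed.

Lemma cvg_abs_le_scaled u l a M w N : cvg_to abs u l -> 0 <= w ->
  (forall n, (N <= n)%N -> abs (u n - a) * w <= M) -> abs (l - a) * w <= M.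
Proof.
move=> ul w0 uM; have [wz|wn0] := eqVneq w 0.
  by have := uM N (leqnn N); rewrite wz !mulr0.
have wp : 0 < w by rewrite lt_def wn0.
by rewrite -ler_pdivlMr //; apply: (cvg_abs_le ul) => n /uM; rewrite ler_pdivlMr.
Qed.

Lemma cvg_to_unique u a b : cvg_to abs u a -> cvg_to abs u b -> a = b.
Proof.
move=> ua ub; apply/eqP; rewrite -subr_eq0 -abs_eq0 eq_le abs_ge0 andbT.
apply/ler_addgt0Pr => e e0; have [N hN] := ub e e0; rewrite add0r.
by apply: (cvg_abs_le ua) => n /hN /ltW.
Qed.

Lemma cvg_toB u v a b : cvg_to abs u a -> cvg_to abs v b ->
  cvg_to abs (fun n => u n - v n) (a - b).
Proof.
move=> ua vb e e0; have [N1 h1] := ua e e0; have [N2 h2] := vb e e0.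
exists (maxn N1 N2) => n; rewrite geq_max => /andP[n1 n2].
have -> : u n - v n - (a - b) = (u n - a) + - (v n - b) by ring.
by apply: le_lt_trans (abs_ultra Hc _ _) _; rewrite gt_max (absN Hc) h1 ?h2.
Qed.

Lemma abs_telescope_le u M N : 0 <= M ->
  (forall n, (N <= n)%N -> abs (u n.+1 - u n) <= M) ->
  forall n j, (N <= n)%N -> abs (u (n + j)%N - u n) <= M.
Proof.
move=> M0 hu n j Nn; elim: j => [|j IH]; first by rewrite addn0 subrr (abs0 Hc).
apply: le_trans (abs_dist_le_max Hc _ (u (n + j)%N) _) _.
by rewrite ge_max IH addnS hu // (leq_trans Nn) ?leq_addr.
Qed.

Lemma cvg_of_steps u :
  (forall e, 0 < e -> exists N, forall n, (N <= n)%N -> abs (u n.+1 - u n) <= e) ->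
  exists l, cvg_to abs u l.
Proof.
move=> hu; apply: (Cp_complete Hc) => e e0.
have [N hN] := hu (e / 2) (divr_gt0 e0 (ltr0Sn _ 1)).
have T := abs_telescope_le (ltW (divr_gt0 e0 (ltr0Sn _ 1))) hN.
have e2 : e / 2 < e by rewrite gtr_pMr ?invf_lt1 ?ltr1n.
have TN k : (N <= k)%N -> abs (u k - u N) < e.
  by move=> Nk; have := T N (k - N)%N (leqnn N); rewrite subnKC // => /le_lt_trans; apply.
exists N => m n Nm Nn; apply: le_lt_trans (abs_dist_le_max Hc _ (u N) _) _.
by rewrite gt_max (abs_distC Hc (u N)) !TN.
Qed.

Lemma ps_evalE a z l : series_to abs a z l -> ps_eval abs a z = l.
Proof. by move=> azl; apply: cvg_to_unique (xgetPex 0 (ex_intro _ l azl)) azl. Qed.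

Lemma series_term_small a z l : series_to abs a z l ->
  forall e, 0 < e -> exists N, forall n, (N <= n)%N -> abs (a n * z ^+ n) <= e.
Proof.
move=> azl e e0; have [N hN] := azl e e0; exists N => n Nn.
have -> : a n * z ^+ n = psum a z n.+1 - psum a z n.
  by rewrite /psum big_ord_recr /= addrAC subrr add0r.
apply: le_trans (abs_dist_le_max Hc _ l _) _.
rewrite ge_max [abs (l - _)](abs_distC Hc).
by apply/andP; split; apply/ltW/hN => //; apply: leqW.
Qed.

Lemma series_terms_bounded a z l : series_to abs a z l ->
  exists B, forall i, abs (a i * z ^+ i) <= B.
Proof.
move=> azl; have [N hN] := series_term_small azl ltr01.
set S := \sum_(i < N) abs (a i * z ^+ i).
have S0 : 0 <= S by rewrite sumr_ge0.
exists (1 + S) => i; have [iN|Ni] := ltnP i N; last by rewrite (le_trans (hN i Ni)) ?lerDl.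
have : abs (a i * z ^+ i) <= S by rewrite /S (bigD1 (Ordinal iN)) //= lerDl sumr_ge0.
by move/le_trans; apply; rewrite lerDr ler01.
Qed.

Lemma series_abs_le a z l m : series_to abs a z l ->
  (forall i, abs (a i * z ^+ i) <= m) -> 0 <= m -> abs l <= m.
Proof.
move=> azl am m0; rewrite -[l]subr0; apply: (cvg_abs_le azl (N := 0)) => n _.
rewrite subr0 -[abs _]mulr1; apply: (abs_sum_le_max Hc) => // i _.
by rewrite mulr1.
Qed.

End Limits.

(** * The fixed point and its power series *)

(* Iterating the relaxation in {poly K} with mu = 'X = lam - 1; the n-th step
   uses Q truncated to n terms, so that every iterate is a polynomial. *)
Fixpoint relax_iter (p : nat) (K : fieldType) (Q : nat -> K) (n : nat) : {poly K} :=
  if n is n'.+1 then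
    let w := relax_iter p Q n' in relax_poly p 'X w (trunc_eval (polyC \o Q) n' (1 + w))
  else 0.

Section FixedPoint.
Variables (p : nat) (K : fieldType) (R : realType) (abs : K -> R).
Hypotheses (Hc : is_Cp abs p) (pP : prime p).
Variables (Q : nat -> K) (m : R).
Hypotheses (hQ : forall i, abs (Q i) <= m) (m1 : m < 1).
Hypothesis hconv : forall z, abs z <= 1 -> exists l, series_to abs Q z l.

Local Notation w := (relax_iter p Q).

Let m0 : 0 <= m. Proof. exact: le_trans (abs_ge0 Hc _) (hQ 0). Qed.

Let Q_small e : 0 < e -> exists N, forall n, (N <= n)%N -> abs (Q n) <= e.
Proof.
have [l hl] : exists l, series_to abs Q 1 l by apply: hconv; rewrite (abs1 Hc).
by move/(series_term_small Hc hl) => [N hN]; exists N => n /hN; rewrite expr1n mulr1.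
Qed.

Let r := m / p%:R.
Let r0 : 0 <= r. Proof. by rewrite divr_ge0 // ler0n. Qed.
Let r1 : r < 1.
Proof. by apply: le_lt_trans m1; rewrite ler_pdivrMr ?natp_gt0 // ler_peMr ?natp_ge1. Qed.
Let r01 : 0 <= r <= 1. Proof. by rewrite r0 ltW. Qed.
Let mr : m <= p%:R * r. Proof. by rewrite mulrC divfK // gt_eqF ?natp_gt0. Qed.

Lemma relax_iter_ball s : 0 <= s -> s <= 1 -> forall n, gauss_le abs s (w n) r.
Proof.
move=> s0 s1; elim=> [|n IH]; first exact: (gauss_le0 Hc s r0).
apply: (relax_poly_ball Hc pP s0 s1 (gauss_leX Hc s0) r01 IH _ mr).
exact: (trunc_eval_bound Hc s0 hQ _ (ltW r1) IH).
Qed.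

Lemma relax_iter_steps s : 0 <= s -> s < 1 ->
  forall e, 0 < e -> exists N, forall n, (N <= n)%N -> gauss_le abs s (w n.+1 - w n) e.
Proof.
move=> s0 s1; have wr := relax_iter_ball s0 (ltW s1).
pose k := Num.max s (Num.max r m).
apply: (contraction_eventually_le (k := k) (D := r) _ r0 _ _ _ Q_small).
- by rewrite le_max s0 /= !gt_max s1 r1 m1.
- by move=> n a b; apply: gauss_leW.
- by move=> n; have := gauss_leB_max Hc s0 (wr n.+1) (wr n); rewrite maxxx.
move=> n a a0 ha; rewrite maxC.
have -> : w n.+2 - w n.+1 =
    (relax_poly p 'X (w n.+1) (trunc_eval (polyC \o Q) n.+1 (1 + w n.+1))
     - relax_poly p 'X (w n.+1) (trunc_eval (polyC \o Q) n (1 + w n.+1)))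
  + (relax_poly p 'X (w n.+1) (trunc_eval (polyC \o Q) n (1 + w n.+1))
     - relax_poly p 'X (w n) (trunc_eval (polyC \o Q) n (1 + w n))).
  by rewrite addrA subrK.
apply: (gauss_leD_max Hc s0).
  apply: (relax_poly_trunc Hc pP s0 (ltW s1) (gauss_leX Hc s0) (ltW r1) (wr _)).
  exact: (trunc_eval_succ Hc s0 _ _ (ltW r1) (wr _)).
apply: (relax_poly_contr Hc pP s0 _ (gauss_leX Hc s0) r01 m0 (wr _) (wr _) ha).
  by rewrite s0 ltW.
exact: (trunc_eval_lip Hc s0 hQ _ (ltW r1) (wr _) (wr _) ha).
Qed.

Definition lim_coef i := xget 0 [set c | cvg_to abs (fun n => (1 + w n)`_i) c].

Lemma lim_coef_cvg i : cvg_to abs (fun n => (1 + w n)`_i) (lim_coef i).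
Proof.
apply: xgetPex; apply: (cvg_of_steps Hc) => e e0.
have h0 : 0 < 2^-1 :> R by rewrite invr_gt0.
have h1 : 2^-1 < 1 :> R by rewrite invf_lt1 ?ltr1n.
have [N hN] := relax_iter_steps (ltW h0) h1 (mulr_gt0 e0 (exprn_gt0 i h0)).
by exists N => n /hN /(_ i); rewrite -coefB subr_add2l ler_pM2r ?exprn_gt0.
Qed.

Lemma horner_relax_iter_cvg x : abs x < 1 ->
  exists l, cvg_to abs (fun n => (1 + w n).[x]) l.
Proof.
move=> x1; apply: (cvg_of_steps Hc) => e e0.
have [N hN] := relax_iter_steps (abs_ge0 Hc x) x1 e0; exists N => n /hN.
rewrite !hornerD subr_add2l -hornerN -hornerD.
exact: (gauss_le_horner Hc (abs_ge0 Hc x) (erefl _)).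
Qed.

Lemma lim_coef_series x l : abs x < 1 ->
  cvg_to abs (fun n => (1 + w n).[x]) l -> series_to abs lim_coef x l.
Proof.
move=> x1 wl e e0; have s0 := abs_ge0 Hc x.
have e2 : 0 < e / 2 by rewrite divr_gt0.
have e2e : e / 2 < e by rewrite gtr_pMr ?invf_lt1 ?ltr1n.
have [N hN] := relax_iter_steps s0 x1 e2.
have [N' hN'] := wl _ e2; set k := maxn N N'.
have ck i : abs (lim_coef i - (1 + w k)`_i) * abs x ^+ i <= e / 2.
  apply: (cvg_abs_le_scaled Hc (lim_coef_cvg i) (exprn_ge0 i s0) (N := k)) => j kj.
  have := gauss_le_telescope Hc s0 (ltW e2) hN (j - k) (leq_maxl N N').
  by rewrite subnKC // => /(_ i); rewrite -coefB subr_add2l.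
exists (size (1 + w k)) => n hn.
have -> : psum lim_coef x n - l =
    (psum lim_coef x n - (1 + w k).[x]) + ((1 + w k).[x] - l) by rewrite addrA subrK.
apply: le_lt_trans (abs_ultra Hc _ _) _.
rewrite gt_max (lt_trans (hN' k _) e2e) ?leq_maxr // andbT.
rewrite /psum (horner_coef_wide _ hn) -sumrB -[abs _]mulr1.
apply: le_lt_trans e2e; apply: (abs_sum_le_max Hc) => // [|i _]; first exact: ltW.
by rewrite mulr1 -mulrBl (absM Hc) (absX Hc).
Qed.

Lemma horner_relax_iter x n :
  (w n.+1).[x] = relax_at p x (w n).[x] (trunc_eval Q n (1 + (w n).[x])).
Proof.
rewrite /= horner_relax_poly hornerX; congr relax_at.
rewrite -[LHS]horner_evalE rmorph_trunc_eval; congr trunc_eval.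
  by apply/funext => i /=; rewrite horner_evalE hornerC.
by rewrite /= horner_evalE hornerD hornerC.
Qed.

Lemma trunc_eval_lip_at n a b : abs a <= r -> abs b <= r ->
  abs (trunc_eval Q n (1 + a) - trunc_eval Q n (1 + b)) <= m * abs (a - b).
Proof.
move=> ar br; apply/(gauss_leC Hc 1).
rewrite polyCB !(rmorph_trunc_eval (@polyC K)) !rmorphD rmorph1.
apply: (trunc_eval_lip Hc ler01 hQ _ (ltW r1));
  by rewrite -?polyCB; apply/(gauss_leC Hc 1).
Qed.

Lemma ps_eval_shift_series u : abs u <= 1 ->
  series_to abs Q (1 + u) (ps_eval abs Q (1 + u)).
Proof.
move=> u1; have [|l hl] := hconv (z := 1 + u); last by rewrite (ps_evalE Hc hl).
by apply: (abs_add_le Hc); rewrite ?(abs1 Hc).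
Qed.

Lemma ps_eval_shift_lip u v : abs u <= r -> abs v <= r ->
  abs (ps_eval abs Q (1 + u) - ps_eval abs Q (1 + v)) <= m * abs (u - v).
Proof.
move=> ur vr; have r1' := ltW r1.
have := cvg_toB Hc (ps_eval_shift_series (le_trans ur r1'))
                   (ps_eval_shift_series (le_trans vr r1')).
move/(cvg_abs_le Hc) => uv; rewrite -[X in abs X]subr0; apply: (uv _ _ 0%N) => n _.
by rewrite subr0; apply: trunc_eval_lip_at.
Qed.

Section AtPoint.
Variable x : K.
Hypothesis x1 : abs x < 1.

Let s0 : 0 <= abs x. Proof. exact: abs_ge0 Hc x. Qed.
Let kap := Num.max (abs x) (Num.max r m).
Let kap1 : kap < 1. Proof. by rewrite !gt_max x1 r1 m1. Qed.
Let gauss_leCx c M : gauss_le abs (abs x) c%:P M <-> abs c <= M := gauss_leC Hc _ c M.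
Let hX : gauss_le abs (abs x) x%:P (abs x). Proof. exact/gauss_leCx. Qed.

Lemma relax_at_contr a b G G' : abs a <= r -> abs b <= r ->
  abs (G - G') <= m * abs (a - b) ->
  abs (relax_at p x a G - relax_at p x b G') <= kap * abs (a - b).
Proof.
move=> ar br hG; apply/gauss_leCx; rewrite polyCB !relax_atC.
apply: (relax_poly_contr Hc pP s0 _ hX r01 m0); rewrite -?polyCB ?gauss_leCx //.
by rewrite s0 ltW.
Qed.

Lemma relax_at_trunc a G G' : abs a <= r ->
  abs (relax_at p x a G - relax_at p x a G') <= abs (G - G').
Proof.
move=> ar; apply/gauss_leCx; rewrite polyCB !relax_atC.
by apply: (relax_poly_trunc Hc pP s0 (ltW x1) hX (ltW r1)); rewrite -?polyCB gauss_leCx.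
Qed.

Lemma abs_relax_at0 G : abs (relax_at p x 0 G) = abs G / p%:R.
Proof.
rewrite /relax_at /relax /Plam_rem !addr0 !expr1n !mul0rn !subrr !mulr0 !add0r.
by rewrite mulNr (absN Hc) !(absM Hc) (abs_inv_sqrp_sub1 Hc pP) mulr1 (abs_p Hc) mulrC.
Qed.

Local Notation F u := (relax_at p x u (ps_eval abs Q (1 + u))).

Lemma relax_series_contr u v : abs u <= r -> abs v <= r ->
  abs (F u - F v) <= kap * abs (u - v).
Proof. by move=> ur vr; apply: relax_at_contr => //; apply: ps_eval_shift_lip. Qed.

Let le_kap_eq0 y : 0 <= y -> y <= kap * y -> y <= 0.
Proof. by move=> y0 yk; have := kap1; nra. Qed.

Lemma relax_series_fixed_unique u v : abs u <= r -> abs v <= r ->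
  F u = u -> F v = v -> u = v.
Proof.
move=> ur vr Fu Fv; apply/eqP; rewrite -subr_eq0 -(abs_eq0 Hc) eq_le (abs_ge0 Hc) andbT.
by apply: le_kap_eq0 (abs_ge0 Hc _) _; rewrite -{1}Fu -{1}Fv relax_series_contr.
Qed.

Lemma relax_series_fixed_small u : abs u <= r -> F u = u ->
  abs u <= abs (ps_eval abs Q 1) / p%:R.
Proof.
move=> ur Fu; have r0' : abs (0 : K) <= r by rewrite (abs0 Hc).
have := relax_series_contr ur r0'; rewrite subr0 Fu addr0 => hc.
have := abs_ultra Hc (u - F 0) (F 0); rewrite subrK le_max abs_relax_at0 addr0.
case/orP=> // /le_trans/(_ hc)/(le_kap_eq0 (abs_ge0 Hc _)) u0.
by apply: le_trans u0 _; rewrite divr_ge0 ?ler0n ?(abs_ge0 Hc).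
Qed.

Lemma relax_iter_limit_fixed l : cvg_to abs (fun n => (1 + w n).[x]) l ->
  abs (l - 1) <= r /\ F (l - 1) = l - 1.
Proof.
move=> wl; set V := l - 1.
have wV : cvg_to abs (fun n => (w n).[x]) V.
  have c1 : cvg_to abs (fun _ => 1 : K) 1.
    by move=> e e0; exists 0%N => n _; rewrite subrr (abs0 Hc).
  by have := cvg_toB Hc wl c1; under eq_fun do rewrite hornerD hornerC addrC addKr.
have wr n : abs (w n).[x] <= r.
  exact: (gauss_le_horner Hc s0 (erefl _) (relax_iter_ball s0 (ltW x1) n)).
have Vr : abs V <= r.
  by rewrite -[V]subr0; apply: (cvg_abs_le Hc wV (N := 0)) => n _; rewrite subr0.
split=> //; apply/eqP; rewrite -subr_eq0 -(abs_eq0 Hc) eq_le (abs_ge0 Hc) andbT.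
apply/ler_addgt0Pr => e e0; rewrite add0r.
have [N1 h1] := ps_eval_shift_series (le_trans Vr (ltW r1)) e0.
have [N2 h2] := wV _ e0; set n := maxn N1 N2.
have -> : F V - V = (F V - relax_at p x V (trunc_eval Q n (1 + V)))
    + (relax_at p x V (trunc_eval Q n (1 + V)) - (w n.+1).[x]) + ((w n.+1).[x] - V).
  by rewrite !addrA !subrK.
apply: (abs_add_le Hc); last by apply/ltW/h2/leqW/leq_maxr.
apply: (abs_add_le Hc).
  apply: le_trans (relax_at_trunc _ _ Vr) _.
  by rewrite (abs_distC Hc); apply/ltW/h1/leq_maxl.
rewrite horner_relax_iter; apply: le_trans (relax_at_contr Vr (wr n) _) _.
  exact: trunc_eval_lip_at.
apply: le_trans (ltW (h2 n (leq_maxr _ _))).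
by rewrite (abs_distC Hc) ler_piMl ?(abs_ge0 Hc) // ltW.
Qed.

End AtPoint.

Lemma relax_fixed_pointE lam v :
  relax_at p (lam - 1) v (ps_eval abs Q (1 + v)) = v <->
  Plam p lam (1 + v) + ps_eval abs Q (1 + v) = 1 + v.
Proof.
have E := relax_fixedE lam v (ps_eval abs Q (1 + v))
  (natp_neq0 Hc pP) (sqrp_sub1_neq0 Hc pP).
by split=> /eqP h; apply/eqP; [rewrite -E | rewrite E].
Qed.

Lemma fixed_point_power_series : exists c : nat -> K, forall lam, inLambda abs lam ->
  exists h, [/\ series_to abs c (lam - 1) h,
    abs (h - 1) <= abs (ps_eval abs Q 1) / p%:R,
    Plam p lam h + ps_eval abs Q h = h &
    forall z, abs (z - 1) <= r -> Plam p lam z + ps_eval abs Q z = z -> z = h].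
Proof.
exists lim_coef => lam lam1; have [l wl] := horner_relax_iter_cvg lam1.
have [Vr FV] := relax_iter_limit_fixed lam1 wl.
exists l; split; first exact: lim_coef_series.
- exact: (relax_series_fixed_small lam1 Vr FV).
- by move/relax_fixed_pointE: FV; rewrite subrKC.
move=> z zr Fz; rewrite -(subrKC 1 z) -(subrKC 1 l); congr (1 + _).
apply: (relax_series_fixed_unique lam1 zr Vr) => //.
by apply/relax_fixed_pointE; rewrite subrKC.
Qed.

End FixedPoint.

Lemma rho_le1 (R : realType) p : (0 < p)%N -> rho R p <= 1.
Proof.
move=> p0; have p1 : 1 <= p%:R :> R by rewrite ler1n.
have e0 : - (p.-1%:R)^-1 <= 0 :> R by rewrite oppr_le0 invr_ge0.
by have := ler_powR p1 e0; rewrite powRr0.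
Qed.

Lemma abs_coef_le_normB (K : fieldType) (R : realType) (abs : K -> R) (rhat B : R)
    (a : nat -> K) : 1 <= rhat -> (forall i, 0 <= abs (a i)) ->
  (forall i, abs (a i) * rhat ^+ i <= B) -> forall i, abs (a i) <= normB abs rhat a.
Proof.
move=> rhat1 a0 aB i; apply: le_trans (_ : abs (a i) * rhat ^+ i <= _).
  by rewrite ler_peMr // exprn_ege1.
apply: sup_upper_bound; last by exists i.
by split; [exists (abs (a 0%N) * rhat ^+ 0), 0%N | exists B => _ [j _ <-]].
Qed.

Theorem proposition3p2 (p : nat) (K : fieldType) (R : realType) (abs : K -> R)
    (rhat : R) (Q : nat -> K) :
  prime p -> is_Cp abs p ->
  (exists c : K, c != 0 /\ abs c = rhat) -> 1 < rhat ->
  in_HB abs rhat Q -> normB abs rhat Q < rho R p ->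
  exists h : K -> K,
    (forall lam : K, inLambda abs lam ->
       [/\ abs (h lam - 1) <= abs (ps_eval abs Q 1) / p%:R,
           Plam p lam (h lam) + ps_eval abs Q (h lam) = h lam
         & forall z : K, abs (z - 1) <= abs (ps_eval abs Q 1) / p%:R ->
             Plam p lam z + ps_eval abs Q z = z -> z = h lam]) /\
    (exists c : nat -> K, forall lam : K, inLambda abs lam ->
       series_to abs c (lam - 1) (h lam)).
Proof.
move=> pP Hc [c [_ c_rhat]] rhat1 HB normQ; set m := normB abs rhat Q.
have rhat_ge1 := ltW rhat1.
have hconv z : abs z <= 1 -> exists l, series_to abs Q z l.
  by move=> z1; apply/HB/(le_trans z1).
have [B hB] : exists B, forall i, abs (Q i) * rhat ^+ i <= B.
  have [l hl] : exists l, series_to abs Q c l by apply: HB; rewrite c_rhat.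
  have [B hB] := series_terms_bounded Hc hl.
  by exists B => i; rewrite -c_rhat -(absX Hc) -(absM Hc).
have hQ := abs_coef_le_normB rhat_ge1 (fun i => abs_ge0 Hc (Q i)) hB.
have m1 : m < 1 := lt_le_trans normQ (rho_le1 R (prime_gt0 pP)).
have Q1m : abs (ps_eval abs Q 1) <= m.
  have [l hl] : exists l, series_to abs Q 1 l by apply: hconv; rewrite (abs1 Hc).
  rewrite (ps_evalE Hc hl).
  apply: (series_abs_le Hc hl) => [i|]; first by rewrite expr1n mulr1 hQ.
  exact: le_trans (abs_ge0 Hc _) (hQ 0%N).
have [c' hc'] := fixed_point_power_series Hc pP hQ m1 hconv.
exists (fun lam => ps_eval abs c' (lam - 1)); split => [lam|]; last first.
  by exists c' => lam /hc' [h [hs _ _ _]]; rewrite (ps_evalE Hc hs).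
have Q1r : abs (ps_eval abs Q 1) / p%:R <= m / p%:R.
  by rewrite ler_pM2r ?invr_gt0 ?natp_gt0.
case/hc' => h [hs h1 fh uh]; rewrite (ps_evalE Hc hs); split=> // z z1.
by apply: uh; apply: le_trans z1 Q1r.
Qed.
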